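(* Let $p,q,r,n$ be integers with $r\ge 0$, $q\ge 2$, $p-q=2r+1$, $n=p+q$, and suppose $q\ge 2r+1$. Then the integrality gap of the clique-web inequality with parameters $n,p,q,r$ is at most $2$, i.e. $\mathrm{sdp}(\mathrm{CW}^r_p,-e)/\mathrm{ip}(\mathrm{CW}^r_p,-e)\le 2$.
   Context: For integers $p,r$ with $p\ge 2r+3$, the antiweb $\mathrm{AW}^r_p$ is the graph on $[p]$ with edges $\{i,i+s\}$ for $i\in[p]$, $1\le s\le r$ (indices mod $p$); the web $\mathrm{W}^r_p$ is its complement in $K_p$. With $p,q,r,n$ as in the claim, $\mathrm{CW}^r_p$ is the graph on $[n]$ consisting of a clique on $\{1,\dots,q\}$, a copy of $\mathrm{W}^r_p$ on $\{q+1,\dots,n\}$, and all edges $ij$ with $1\le i\le q<j\le n$. The clique-web inequality is $-\sum_{ij\in E(\mathrm{CW}^r_p)}x_{ij}\le q(r+1)$. For a graph $G=([n],E)$ and $w\in\mathbb{R}^E$, $\mathrm{ip}(G,w)=\max_{x\in\{\pm1\}^n}\sum_{ij\in E}w_{ij}x_ix_j$ and $\mathrm{sdp}(G,w)=\max\sum_{ij\in E}w_{ij}u_i^Tu_j$ over unit vectors $u_i\in\mathbb{R}^n$; $e$ denotes the all-ones vector in $\mathbb{R}^{E(\mathrm{CW}^r_p)}$. The integrality gap of the clique-web inequality is $\mathrm{sdp}(\mathrm{CW}^r_p,-e)/\mathrm{ip}(\mathrm{CW}^r_p,-e)$, where $\mathrm{ip}(\mathrm{CW}^r_p,-e)=q(r+1)$.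 *)

From HB Require Import structures.
From mathcomp Require Import all_boot all_order all_algebra.
From mathcomp Require Import boolp classical_sets reals.
Set Implicit Arguments. Unset Strict Implicit. Unset Printing Implicit Defensive.
Import Order.TTheory GRing.Theory Num.Theory.
Local Open Scope ring_scope.
Local Open Scope classical_set_scope.

(* Vertices are 0-indexed: paper vertex k corresponds to our k-1.
   Paper vertices 1..q (clique) are our 0..q-1; paper vertices q+1..n
   (the web, paper label q+t, t in [p]) are our q..n-1 (web index t-1). *)

Definition circ_dist (p a b : nat) : nat :=
  let d := if (a <= b)%N then (b - a)%N else (a - b)%N in minn d (p - d)%N.

(* adjacency in the antiweb AW^r_p on {0..p-1}: {i, i+s mod p}, 1 <= s <= r *)
Definition antiweb_adj (p r a b : nat) : bool :=
  (a != b) && (circ_dist p a b <= r)%N.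

Definition web_adj (p r a b : nat) : bool :=
  (a != b) && ~~ antiweb_adj p r a b.

Definition cw_adj (p q r i j : nat) : bool :=
  (i != j) &&
  [|| (i < q)%N, (j < q)%N | web_adj p r (i - q) (j - q)].

Definition CW (n p q r : nat) : rel 'I_n := fun i j => cw_adj p q r i j.

Definition ip_val {R : realType} (n : nat) (G : rel 'I_n)
    (w : 'I_n -> 'I_n -> R) (x : 'I_n -> R) : R :=
  \sum_(i < n) \sum_(j < n | (i < j)%N && G i j) w i j * x i * x j.

Definition ip {R : realType} (n : nat) (G : rel 'I_n)
    (w : 'I_n -> 'I_n -> R) : R :=
  sup [set v | exists s : {ffun 'I_n -> bool},
          v = ip_val G w (fun i => if s i then 1 else -1)].

Definition dotr {R : realType} (n : nat) (U : 'M[R]_n) (i j : 'I_n) : R :=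
  \sum_(k < n) U i k * U j k.

Definition sdp_val {R : realType} (n : nat) (G : rel 'I_n)
    (w : 'I_n -> 'I_n -> R) (U : 'M[R]_n) : R :=
  \sum_(i < n) \sum_(j < n | (i < j)%N && G i j) w i j * dotr U i j.

Definition sdp {R : realType} (n : nat) (G : rel 'I_n)
    (w : 'I_n -> 'I_n -> R) : R :=
  sup [set v | exists U : 'M[R]_n,
          (forall i, dotr U i i = 1) /\ v = sdp_val G w U].

Definition minus_e {R : realType} (n : nat) : 'I_n -> 'I_n -> R :=
  fun _ _ => -1.
Arguments CW : clear implicits.

(* Since CW^r_p has the antiweb AW^r_p (on the web vertices) as its complement in K_n,
   for -e the objective is (sum of diagonal - sum of all Gram entries)/2 plus the sum of
   the Gram entries over antiweb edges. For the sdp the total Gram sum is a square, hence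
   nonnegative, and antiweb entries are at most 1, so sdp <= n/2 + |E(AW)|. For the ip the
   cut putting the clique at -1 and the web at +1 gives (n - (p-q)^2)/2 + |E(AW)|, and
   |E(AW)| >= p r makes this at least half of the sdp bound when q >= 2r+1. *)
From HB Require Import structures.
From mathcomp Require Import all_boot all_order all_algebra.
From mathcomp Require Import boolp classical_sets reals.
From mathcomp Require Import zify ring lra.
Import Order.TTheory GRing.Theory Num.Theory.
Local Open Scope ring_scope.

Section PairSums.
Context {R : numFieldType} {n : nat}.

Lemma sum_sym_pairs (f : 'I_n -> 'I_n -> R) : (forall i j, f i j = f j i) ->
  \sum_(i < n) \sum_(j < n) f i j =
  2 * \sum_(i < n) \sum_(j < n | (i < j)%N) f i j + \sum_(i < n) f i i.
Proof.
move=> fC.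
have split_row i : \sum_(j < n) f i j =
    \sum_(j < n | (i < j)%N) f i j + \sum_(j < n | (j < i)%N) f i j + f i i.
  rewrite (bigD1 i) //= addrC (bigID (fun j : 'I_n => (i < j)%N)) /=.
  by congr (_ + _ + _); apply: eq_bigl => j; rewrite -val_eqE /=; case: ltngtP.
rewrite (eq_bigr _ (fun i _ => split_row i)) !big_split /=; congr (_ + _).
have -> : \sum_(i < n) \sum_(j < n | (j < i)%N) f i j =
          \sum_(i < n) \sum_(j < n | (i < j)%N) f i j.
  under eq_bigr do rewrite big_mkcond /=.
  rewrite exchange_big /=; apply: eq_bigr => i _.
  by rewrite [RHS]big_mkcond; apply: eq_bigr => j _; rewrite fC.
by rewrite mulr2n mulrDl mul1r.
Qed.

Context {G H : rel 'I_n}.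
Hypothesis G_compl_H : forall i j : 'I_n, (i < j)%N -> G i j = ~~ H i j.

Lemma sum_pairs_compl (f : 'I_n -> 'I_n -> R) :
  \sum_(i < n) \sum_(j < n | (i < j)%N && G i j) f i j =
  \sum_(i < n) \sum_(j < n | (i < j)%N) f i j -
  \sum_(i < n) \sum_(j < n | (i < j)%N && H i j) f i j.
Proof.
rewrite -sumrB; apply: eq_bigr => i _.
rewrite [X in _ = X - _](bigID (H i)) /= addrAC subrr add0r.
by apply: eq_bigl => j; case: ltnP => //= /G_compl_H ->.
Qed.

Lemma sum_minus_pairs_compl (f : 'I_n -> 'I_n -> R) :
  (forall i j, f i j = f j i) ->
  \sum_(i < n) \sum_(j < n | (i < j)%N && G i j) (- f i j) =
  (\sum_(i < n) f i i - \sum_(i < n) \sum_(j < n) f i j) / 2 +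
  \sum_(i < n) \sum_(j < n | (i < j)%N && H i j) f i j.
Proof.
move=> fC; rewrite (sum_sym_pairs _ fC).
under eq_bigr do rewrite sumrN.
by rewrite sumrN sum_pairs_compl; field.
Qed.

End PairSums.

Definition pair_count {n : nat} (H : rel 'I_n) : nat :=
  \sum_(i < n) \sum_(j < n | (i < j)%N && H i j) 1.

Section GramBounds.
Context {R : realType} {n : nat}.

Lemma dotrC (U : 'M[R]_n) i j : dotr U i j = dotr U j i.
Proof. by apply: eq_bigr => k _; rewrite mulrC. Qed.

Lemma dotr_le1 (U : 'M[R]_n) i j :
  dotr U i i = 1 -> dotr U j j = 1 -> dotr U i j <= 1.
Proof.
move=> Ui Uj; suff: 2 * dotr U i j <= dotr U i i + dotr U j j by rewrite Ui Uj; lra.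
rewrite /dotr mulr_sumr -big_split /=; apply: ler_sum => k _.
have := sqr_ge0 (U i k - U j k); rewrite expr2; nra.
Qed.

Lemma sum_dotr_ge0 (U : 'M[R]_n) : 0 <= \sum_(i < n) \sum_(j < n) dotr U i j.
Proof.
rewrite /dotr; under eq_bigr do rewrite exchange_big.
rewrite exchange_big /=; apply: sumr_ge0 => k _.
have -> : \sum_(i < n) \sum_(j < n) U i k * U j k = (\sum_(i < n) U i k) ^+ 2.
  by rewrite expr2 mulr_suml; apply: eq_bigr => i _; rewrite mulr_sumr.
exact: sqr_ge0.
Qed.

Lemma dotr1 (i : 'I_n) : dotr (1%:M : 'M[R]_n) i i = 1.
Proof.
rewrite /dotr (bigD1 i) //= !mxE eqxx mulr1 big1 ?addr0 // => k ki.
by rewrite !mxE eq_sym (negbTE ki) mul0r.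
Qed.

Context {G H : rel 'I_n}.
Hypothesis G_compl_H : forall i j : 'I_n, (i < j)%N -> G i j = ~~ H i j.

Lemma sdp_val_minus_e_le (U : 'M[R]_n) : (forall i, dotr U i i = 1) ->
  sdp_val G (@minus_e R n) U <= n%:R / 2 + (pair_count H)%:R.
Proof.
move=> U1; rewrite /sdp_val /minus_e.
under eq_bigr do under eq_bigr do rewrite mulN1r.
rewrite (sum_minus_pairs_compl G_compl_H _ (dotrC U)).
rewrite (eq_bigr (fun=> 1)) // sumr_const card_ord.
have := sum_dotr_ge0 U.
have : \sum_(i < n) \sum_(j < n | (i < j)%N && H i j) dotr U i j <= (pair_count H)%:R.
  rewrite /pair_count natr_sum; apply: ler_sum => i _; rewrite natr_sum.
  by apply: ler_sum => j _; apply: dotr_le1.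
lra.
Qed.

Lemma ip_val_minus_e (x : 'I_n -> R) : (forall i, x i * x i = 1) ->
  ip_val G (@minus_e R n) x =
  (n%:R - (\sum_(i < n) x i) ^+ 2) / 2 +
  \sum_(i < n) \sum_(j < n | (i < j)%N && H i j) x i * x j.
Proof.
move=> x2; rewrite /ip_val /minus_e.
under eq_bigr do under eq_bigr do rewrite -mulrA mulN1r.
rewrite (sum_minus_pairs_compl G_compl_H _ (fun i j => mulrC (x i) (x j))).
rewrite (eq_bigr (fun=> 1)) // sumr_const card_ord; congr (_ / 2 + _).
by rewrite expr2 mulr_suml; congr (_ - _); apply: eq_bigr => i _; rewrite mulr_sumr.
Qed.

End GramBounds.

Definition sign_vec {R : realType} {n : nat} (s : {ffun 'I_n -> bool}) (i : 'I_n) : R :=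
  if s i then 1 else -1.

Section Extremal.
Context {R : realType} {n : nat} (G : rel 'I_n) (w : 'I_n -> 'I_n -> R).

Lemma ip_val_le_ip s : ip_val G w (sign_vec s) <= ip G w.
Proof.
apply: sup_upper_bound; last by exists s.
split; first by exists (ip_val G w (sign_vec s)), s.
exists (\sum_(i < n) \sum_(j < n | (i < j)%N && G i j) `|w i j|) => _ [t ->].
apply: ler_sum => i _; apply: ler_sum => j _; rewrite -mulrA.
apply: le_trans (ler_norm _) _; rewrite normrM ler_piMr //.
by rewrite /sign_vec; case: (t i); case: (t j); rewrite /= ?mulN1r ?mul1r ?normrN normr1.
Qed.

Lemma sdp_le (b : R) :
  (forall U : 'M[R]_n, (forall i, dotr U i i = 1) -> sdp_val G w U <= b) ->
  sdp G w <= b.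
Proof.
move=> Ub; apply: ge_sup; last by move=> _ [U [U1 ->]]; exact: Ub.
by exists (sdp_val G w 1%:M), 1%:M; split=> // i; apply: dotr1.
Qed.

End Extremal.

Definition antiweb_part (p q r : nat) {n : nat} (i j : 'I_n) : bool :=
  (q <= i)%N && (q <= j)%N && antiweb_adj p r (i - q) (j - q).

Lemma CW_compl_antiweb n p q r (i j : 'I_n) :
  (i < j)%N -> CW n p q r i j = ~~ antiweb_part p q r i j.
Proof.
move=> ij; rewrite /CW /cw_adj /antiweb_part /web_adj.
have -> : (i != j) = true by rewrite -val_eqE /=; apply/eqP; lia.
case: (ltnP i q) => //= qi; case: (ltnP j q) => //= qj.
by have -> : (i - q != j - q)%N = true by apply/eqP; lia.
Qed.

Lemma antiweb_edges_ge p q r : (2 * r < p)%N ->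
  (p * r <= pair_count (@antiweb_part p q r (p + q)))%N.
Proof.
move=> rp; rewrite /pair_count pair_big_dep /= sum1_card.
(* (t, s) |-> the antiweb edge {t, t + s + 1 mod p}, shifted onto the web vertices *)
pose e (ts : 'I_p * 'I_r) : 'I_(p + q) * 'I_(p + q) :=
  let: (t, s) := ts in let c := (t + s + 1)%N in let d := lshift q t in
  if (c < p)%N then (insubd d (q + t)%N, insubd d (q + c)%N)
  else (insubd d (q + c - p)%N, insubd d (q + t)%N).
have e_inj : injective e.
  move=> [t s] [t' s']; rewrite /e /=.
  have := ltn_ord t; have := ltn_ord s; have := ltn_ord t'; have := ltn_ord s'.
  move=> s'r t'p sr tp; case: ifP => c1; case: ifP => c2 [] /(congr1 val) + /(congr1 val);
    rewrite !insubdK ?inE; try lia; move=> e1 e2;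
    by congr pair; apply: val_inj => /=; lia.
have -> : (p * r = #|[set e ts | ts in [set: 'I_p * 'I_r]]|)%N.
  by rewrite card_imset // cardsT card_prod !card_ord.
apply: subset_leq_card.
apply/fintype.subsetP => _ /imsetP [[t s] _ ->].
have := ltn_ord t; have := ltn_ord s => sr tp.
rewrite /e /=; case: ifP => c;
  rewrite unfold_in /antiweb_part /antiweb_adj /circ_dist /= !insubdK ?inE; try lia;
  case: ifP => _; lia.
Qed.

Lemma sum_threshold_sign (R : pzRingType) p q :
  \sum_(i < p + q) (if (q <= i)%N then 1 else -1 : R) = p%:R - q%:R.
Proof.
rewrite -(big_mkord xpredT (fun i => if (q <= i)%N then 1 else -1 : R)).
rewrite (big_cat_nat (leq0n q) (leq_addl p q)) /=.
rewrite big_nat_cond (eq_bigr (fun=> -1)); last first.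
  by move=> i /andP[/andP[_ iq] _]; rewrite leqNgt iq.
rewrite -big_nat_cond sumr_const_nat.
rewrite big_nat_cond (eq_bigr (fun=> 1)); last first.
  by move=> i /andP[/andP[qi _] _]; rewrite qi.
by rewrite -big_nat_cond sumr_const_nat subn0 addnK mulNrn addrC.
Qed.

Lemma clique_web_sign_val (R : realType) p q r :
  ip_val (CW (p + q) p q r) (@minus_e R (p + q))
    (sign_vec [ffun i : 'I_(p + q) => (q <= i)%N]) =
  ((p + q)%:R - (p%:R - q%:R) ^+ 2) / 2 +
  (pair_count (@antiweb_part p q r (p + q)))%:R.
Proof.
rewrite (ip_val_minus_e (@CW_compl_antiweb _ p q r)); last first.
  by move=> i; rewrite /sign_vec; case: ifP => _; rewrite ?mulrNN mulr1.
congr (_ / 2 + _).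
  congr (_ - _ ^+ 2); rewrite -(sum_threshold_sign R p q).
  by apply: eq_bigr => i _; rewrite /sign_vec ffunE.
rewrite /pair_count natr_sum; apply: eq_bigr => i _; rewrite natr_sum.
apply: eq_bigr => j /andP[_ /andP[/andP[qi qj] _]].
by rewrite /sign_vec !ffunE qi qj mulr1.
Qed.

Lemma clique_web_gap_arith (R : realFieldType) (p q r a : R) :
  p = q + 2 * r + 1 -> 0 <= r -> 2 * r + 1 <= q -> p * r <= a ->
  let v := ((p + q) - (p - q) ^+ 2) / 2 + a in
  0 < v /\ (p + q) / 2 + a <= 2 * v.
Proof.
move=> -> r0 qr ra v; have : 0 <= (q - 2 * r - 1) * (r + 1) by apply: mulr_ge0; lra.
rewrite /v; split; nra.
Qed.

Theorem mainTheorem10 (R : realType) (p q r n : nat) :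
  (2 <= q)%N -> p = (q + 2 * r + 1)%N -> n = (p + q)%N -> (2 * r + 1 <= q)%N ->
  sdp (CW n p q r) (@minus_e R n) / ip (CW n p q r) (@minus_e R n) <= 2.
Proof.
move=> _ pE -> qr; set A := pair_count (@antiweb_part p q r (p + q)).
have A_ge : (p * r <= A)%N by apply: antiweb_edges_ge; lia.
have sdp_le_bound : sdp (CW (p + q) p q r) (@minus_e R (p + q)) <= (p + q)%:R / 2 + A%:R.
  exact/sdp_le/sdp_val_minus_e_le/CW_compl_antiweb.
have := ip_val_le_ip (CW (p + q) p q r) (@minus_e R (p + q))
  [ffun i : 'I_(p + q) => (q <= i)%N].
rewrite clique_web_sign_val -/A => ip_ge.
have [] := @clique_web_gap_arith R p%:R q%:R r%:R A%:R _ (ler0n _ r).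
- by rewrite pE !(natrD, natrM).
- by move: qr; rewrite -(ler_nat R) !(natrD, natrM).
- by rewrite -natrM ler_nat.
rewrite -natrD => v_gt0 bound.
rewrite ler_pdivrMr; last exact: lt_le_trans v_gt0 ip_ge.
lra.
Qed.
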